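(* Let $\lambda>1$, $b\ge 0$, and let $(s_n)_{n\ge0}\subset[0,1)$, $(s'_n)_{n\ge0}\subset(0,1]$, $(r_n)_{n\ge0}\subset\mathbb{R}$. Consider the planar system $$x_{n+1}=s_nx_n+s'_ny_n,\qquad y_{n+1}=x_n^{\lambda}e^{r_n-bx_{n+1}-x_n},\qquad n\ge0,$$ with $(x_0,y_0)\in[0,\infty)^2$. Put $a_n=r_{n-1}+\ln s'_n$ for $n\ge1$, and assume $s\doteq\sup_n s_n<1$, $A\doteq\sup_{n\ge1}a_n<\infty$, $\inf_n s'_n>0$. If $A<\ln(1-s)+(\lambda-1)[1-\ln(\lambda-1)]$, then every orbit $\{(x_n,y_n)\}$ with $(x_0,y_0)\in[0,\infty)^2$ converges to $(0,0)$. *)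

From Stdlib Require Import Reals.
Open Scope R_scope.

(* x^lam for x >= 0 and lam > 0, with the convention 0^lam = 0. *)
Definition rpow0 (x lam : R) : R := if Req_EM_T x 0 then 0 else Rpower x lam.

Fixpoint orbit (lam b : R) (s s' r : nat -> R) (x0 y0 : R) (n : nat) : R * R :=
  match n with
  | O => (x0, y0)
  | S k => let (x, y) := orbit lam b s s' r x0 y0 k in
           let x1 := s k * x + s' k * y in
           (x1, rpow0 x lam * exp (r k - b * x1 - x))
  end.

From Stdlib Require Import Reals Lra Lia.
Open Scope R_scope.

(* Since x^(lam-1) e^(-x) is at most ((lam-1)/e)^(lam-1), the second equation
   gives s'_(n+1) y_(n+1) <= K x_n with K = e^A ((lam-1)/e)^(lam-1), and the
   hypothesis on A says exactly that s + K < 1.  The first equation then yields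
   the linear recursive inequality x_(n+2) <= s x_(n+1) + K x_n, so the maximum
   of two consecutive terms shrinks by the factor s + K every two steps and
   x_n -> 0.  Finally inf s' * y_n <= x_(n+1), so y_n -> 0 as well. *)

Lemma exp_le_compat x y : x <= y -> exp x <= exp y.
Proof. intros [Hlt | ->]; [left; apply exp_increasing, Hlt | lra]. Qed.

Lemma ln_pow_sub_le lam x : 1 < lam -> 0 < x ->
  lam * ln x - x <= ln x + (lam - 1) * (ln (lam - 1) - 1).
Proof.
  intros Hlam Hx.
  set (t := x / (lam - 1)).
  assert (Ht : 0 < t) by (apply Rdiv_lt_0_compat; lra).
  assert (Hxt : x = t * (lam - 1)) by (unfold t; field; lra).
  assert (Hln : ln x = ln t + ln (lam - 1)) by (rewrite Hxt; apply ln_mult; lra).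
  (* ln t <= t - 1 *)
  pose proof (exp_ineq1_le (ln t)) as Hexp; rewrite exp_ln in Hexp by exact Ht.
  assert (0 <= (lam - 1) * (t - 1 - ln t)) by (apply Rmult_le_pos; lra).
  rewrite Hln, Hxt; nra.
Qed.

Lemma rpow0_mul_exp_opp_le lam x : 1 < lam -> 0 <= x ->
  rpow0 x lam * exp (- x) <= exp ((lam - 1) * (ln (lam - 1) - 1)) * x.
Proof.
  intros Hlam Hx; unfold rpow0.
  destruct (Req_EM_T x 0) as [-> | Hx0]; [lra |].
  assert (Hxpos : 0 < x) by lra.
  unfold Rpower; rewrite <- exp_plus.
  replace (exp ((lam - 1) * (ln (lam - 1) - 1)) * x)
    with (exp ((lam - 1) * (ln (lam - 1) - 1) + ln x)) by (rewrite exp_plus, exp_ln; auto).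
  apply exp_le_compat.
  pose proof (ln_pow_sub_le lam x Hlam Hxpos); lra.
Qed.

Lemma Un_cv_0_le_scal (u v : nat -> R) (C : R) :
  (forall n, 0 <= v n <= C * u n) -> Un_cv u 0 -> Un_cv v 0.
Proof.
  intros Hvu Hu eps Heps.
  assert (HC : 0 <= Rabs C) by apply Rabs_pos.
  destruct (Hu (eps / (Rabs C + 1))) as [N HN]; [apply Rdiv_lt_0_compat; lra |].
  exists N; intros n Hn.
  specialize (HN n Hn); specialize (Hvu n).
  unfold Rdist in *; rewrite Rminus_0_r in *.
  rewrite Rabs_right by lra.
  assert (HCu : C * u n <= Rabs C * Rabs (u n))
    by (rewrite <- Rabs_mult; apply Rle_abs).
  assert (Hlt : Rabs C * Rabs (u n) <= Rabs C * (eps / (Rabs C + 1)))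
    by (apply Rmult_le_compat_l; lra).
  assert (Rabs C * (eps / (Rabs C + 1)) < eps).
  { apply (Rmult_lt_reg_r (Rabs C + 1)); [lra |].
    field_simplify; lra. }
  lra.
Qed.

Lemma Un_cv_pow_div2 th : 0 <= th < 1 -> Un_cv (fun n => th ^ Nat.div2 n) 0.
Proof.
  intros Hth eps Heps.
  destruct (pow_lt_1_zero th ltac:(rewrite Rabs_right; lra) eps Heps) as [N HN].
  exists (2 * N)%nat; intros n Hn.
  unfold Rdist; rewrite Rminus_0_r.
  apply HN, Nat.div2_le_lower_bound; lia.
Qed.

Lemma two_step_contraction_bound (v : nat -> R) (th : R) :
  0 <= th -> (forall n, v (S (S n)) <= th * v n) ->
  forall n, v n <= th ^ Nat.div2 n * Rmax (v 0%nat) (v 1%nat).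
Proof.
  intros Hth Hv.
  assert (Hpair : forall n, v n <= th ^ Nat.div2 n * Rmax (v 0%nat) (v 1%nat) /\
                            v (S n) <= th ^ Nat.div2 (S n) * Rmax (v 0%nat) (v 1%nat)).
  { induction n as [| n [IHn IHSn]].
    - simpl; rewrite !Rmult_1_l; split; [apply Rmax_l | apply Rmax_r].
    - split; [exact IHSn |].
      change (th ^ Nat.div2 (S (S n))) with (th * th ^ Nat.div2 n).
      rewrite Rmult_assoc.
      apply (Rle_trans _ (th * v n)); [apply Hv | apply Rmult_le_compat_l; lra]. }
  intro n; apply Hpair.
Qed.

Lemma two_step_contraction_cv0 (v : nat -> R) (th : R) :
  0 <= th < 1 -> (forall n, 0 <= v n) -> (forall n, v (S (S n)) <= th * v n) ->
  Un_cv v 0.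
Proof.
  intros Hth Hv0 Hv.
  apply (Un_cv_0_le_scal (fun n => th ^ Nat.div2 n) v (Rmax (v 0%nat) (v 1%nat))).
  - intro n; split; [apply Hv0 |].
    rewrite Rmult_comm; apply two_step_contraction_bound; [lra | exact Hv].
  - apply Un_cv_pow_div2, Hth.
Qed.

Lemma second_order_cv0 (u : nat -> R) (p q : R) :
  0 <= p -> 0 <= q -> p + q < 1 -> (forall n, 0 <= u n) ->
  (forall n, u (S (S n)) <= p * u (S n) + q * u n) ->
  Un_cv u 0.
Proof.
  intros Hp Hq Hpq Hu0 Hu.
  set (m n := Rmax (u n) (u (S n))).
  assert (Hum : forall n, u n <= m n /\ u (S n) <= m n)
    by (intro n; split; [apply Rmax_l | apply Rmax_r]).
  assert (Hstep : forall n, u (S (S n)) <= (p + q) * m n).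
  { intro n; destruct (Hum n).
    pose proof (Hu n); pose proof (Hu0 n); pose proof (Hu0 (S n)); nra. }
  apply (Un_cv_0_le_scal m u 1).
  - intro n; split; [apply Hu0 | rewrite Rmult_1_l; apply Hum].
  - apply (two_step_contraction_cv0 m (p + q)); [lra | |].
    + intro n; pose proof (Hu0 n); pose proof (Rmax_l (u n) (u (S n))); unfold m; lra.
    + intro n; apply Rmax_lub; [apply Hstep |].
      (* u (n+2) <= (p+q) m n <= m n and u (n+1) <= m n feed the next step *)
      pose proof (Hstep n); pose proof (Hstep (S n)) as Hnext; destruct (Hum n).
      assert (Hm : 0 <= m n) by (pose proof (Hu0 n); lra).
      assert (Hmax : m (S n) <= m n)
        by (apply Rmax_lub; [lra | unfold m in *; nra]).
      pose proof (Rmult_le_compat_l (p + q) _ _ ltac:(lra) Hmax); lra.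
Qed.

Section Orbit.

Variables (lam b : R) (s s' r : nat -> R) (x0 y0 : R).

Local Notation X n := (fst (orbit lam b s s' r x0 y0 n)).
Local Notation Y n := (snd (orbit lam b s s' r x0 y0 n)).

Lemma orbit_fst_S k : X (S k) = s k * X k + s' k * Y k.
Proof. simpl; destruct (orbit lam b s s' r x0 y0 k); reflexivity. Qed.

Lemma orbit_snd_S k :
  Y (S k) = rpow0 (X k) lam * exp (r k - b * X (S k) - X k).
Proof. simpl; destruct (orbit lam b s s' r x0 y0 k); reflexivity. Qed.

Hypotheses (Hx0 : 0 <= x0) (Hy0 : 0 <= y0)
  (Hs : forall n, 0 <= s n) (Hs' : forall n, 0 < s' n).

Lemma orbit_nonneg n : 0 <= X n /\ 0 <= Y n.
Proof.
  induction n as [| n [HX HY]]; [simpl; lra |].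
  rewrite orbit_fst_S, orbit_snd_S; split.
  - pose proof (Rmult_le_pos _ _ (Hs n) HX).
    pose proof (Rmult_le_pos _ _ (Rlt_le _ _ (Hs' n)) HY); lra.
  - apply Rmult_le_pos; [| left; apply exp_pos].
    unfold rpow0; destruct (Req_EM_T (X n) 0); [lra | left; apply exp_pos].
Qed.

Lemma orbit_snd_le_fst (c : R) : (forall n, c <= s' n) ->
  forall k, c * Y k <= X (S k).
Proof.
  intros Hc k; rewrite orbit_fst_S.
  destruct (orbit_nonneg k) as [HX HY].
  pose proof (Rmult_le_pos _ _ (Hs k) HX).
  pose proof (Rmult_le_compat_r _ _ _ HY (Hc k)); lra.
Qed.

Lemma orbit_snd_S_le (A : R) : 1 < lam -> 0 <= b ->
  (forall k, r k + ln (s' (S k)) <= A) ->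
  forall k, s' (S k) * Y (S k) <= exp (A + (lam - 1) * (ln (lam - 1) - 1)) * X k.
Proof.
  intros Hlam Hb HA k; rewrite orbit_snd_S.
  destruct (orbit_nonneg k) as [HX _]; destruct (orbit_nonneg (S k)) as [HSX _].
  replace (s' (S k) * (rpow0 (X k) lam * exp (r k - b * X (S k) - X k)))
    with (exp (r k + ln (s' (S k)) - b * X (S k)) * (rpow0 (X k) lam * exp (- X k))).
  2: { replace (r k - b * X (S k) - X k) with ((r k - b * X (S k)) + - X k) by ring.
       replace (r k + ln (s' (S k)) - b * X (S k)) with (ln (s' (S k)) + (r k - b * X (S k)))
         by ring.
       rewrite !exp_plus, exp_ln by apply Hs'; ring. }
  rewrite exp_plus, Rmult_assoc.
  apply Rmult_le_compat; [left; apply exp_pos | | |].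
  - apply Rmult_le_pos; [| left; apply exp_pos].
    unfold rpow0; destruct (Req_EM_T (X k) 0); [lra | left; apply exp_pos].
  - apply exp_le_compat; pose proof (HA k); pose proof (Rmult_le_pos _ _ Hb HSX); lra.
  - apply rpow0_mul_exp_opp_le; assumption.
Qed.

End Orbit.

Theorem mainTheorem2 (lam b : R) (s s' r : nat -> R) (sup_s A : R) :
  1 < lam -> 0 <= b ->
  (forall n, 0 <= s n < 1) ->
  (forall n, 0 < s' n <= 1) ->
  is_lub (fun v => exists n, v = s n) sup_s -> sup_s < 1 ->
  is_lub (fun v => exists n, (1 <= n)%nat /\ v = r (n - 1)%nat + ln (s' n)) A ->
  (exists c, 0 < c /\ forall n, c <= s' n) ->
  A < ln (1 - sup_s) + (lam - 1) * (1 - ln (lam - 1)) ->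
  forall x0 y0, 0 <= x0 -> 0 <= y0 ->
    Un_cv (fun n => fst (orbit lam b s s' r x0 y0 n)) 0 /\
    Un_cv (fun n => snd (orbit lam b s s' r x0 y0 n)) 0.
Proof.
  intros Hlam Hb Hs Hs' [Hsup_ub _] Hsup [HA_ub _] [c [Hc Hcs']] HAsmall x0 y0 Hx0 Hy0.
  assert (Hs0 : forall n, 0 <= s n) by (intro n; apply Hs).
  assert (Hs'0 : forall n, 0 < s' n) by (intro n; apply Hs').
  assert (Hsup_s : forall n, s n <= sup_s) by (intro n; apply Hsup_ub; exists n; reflexivity).
  assert (HA : forall k, r k + ln (s' (S k)) <= A).
  { intro k; apply HA_ub; exists (S k); split; [lia | now rewrite Nat.sub_succ, Nat.sub_0_r]. }
  set (K := exp (A + (lam - 1) * (ln (lam - 1) - 1))).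
  assert (HK : K < 1 - sup_s).
  { rewrite <- (exp_ln (1 - sup_s)) by lra; apply exp_increasing; lra. }
  pose proof (orbit_nonneg lam b s s' r x0 y0 Hx0 Hy0 Hs0 Hs'0) as Hnn.
  assert (HcvX : Un_cv (fun n => fst (orbit lam b s s' r x0 y0 n)) 0).
  { apply (second_order_cv0 _ sup_s K); [pose proof (Hs0 O); pose proof (Hsup_s O); lra
                                        | left; apply exp_pos | lra | apply Hnn |].
    intro n; rewrite orbit_fst_S.
    pose proof (orbit_snd_S_le lam b s s' r x0 y0 Hx0 Hy0 Hs0 Hs'0 A Hlam Hb HA n) as HY.
    fold K in HY.
    pose proof (Rmult_le_compat_r _ _ _ (proj1 (Hnn (S n))) (Hsup_s (S n))); lra. }
  split; [exact HcvX |].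
  apply (Un_cv_0_le_scal (fun n => fst (orbit lam b s s' r x0 y0 (n + 1))) _ (/ c)).
  - intro n; rewrite Nat.add_1_r; split; [apply Hnn |].
    pose proof (orbit_snd_le_fst lam b s s' r x0 y0 Hx0 Hy0 Hs0 Hs'0 c Hcs' n) as HcY.
    apply (Rmult_le_reg_l c); [exact Hc |].
    rewrite <- Rmult_assoc, Rinv_r, Rmult_1_l by lra; exact HcY.
  - exact (CV_shift' _ 1 0 HcvX).
Qed.
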